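(* (Expression Well-Typedness.) Let $\Gamma$ be a Bundl context, $e$ an expression, $\tau$ a type, $\pi,\pi'$ perspectives, $p\in\mathbb{N}$ and $\eta,\sigma,\Sigma$ local, shared and global memories, and assume all array accesses are in bounds (whenever during evaluation an array expression evaluates to $\langle l,n\rangle$ and its index to $i$, then $0\le i<n$). If $\Gamma\vdash^{\pi} e:\tau$, $\Gamma\vdash\eta,\sigma,\Sigma$, $\pi\vdash p$, and $\eta,\sigma,\Sigma\vdash^{\pi}_{\pi'} e\Downarrow v$, then $\eta,\sigma,\Sigma\vdash v:\tau$.
   Context: Bundl is parameterized by fixed positive integers $T$ (threads per block) and $B$ (blocks per grid). Levels $h\in\{\mathrm{Thread},\mathrm{Block},\mathrm{Grid}\}$ with $\mathrm{Thread}\le\mathrm{Block}\le\mathrm{Grid}$; memory kinds $l\in\{\mathrm{Local},\mathrm{Shared},\mathrm{Global}\}$. A perspective is $\pi=(h,n)$, $n\in\mathbb{N}$; $(h_1,n_1)\le(h_2,n_2)$ iff $n_1\mid n_2$ and $h_1\le h_2$; $<$ is the strict version. Level ratios $\mathrm{Grid}/\mathrm{Block}=B$, $\mathrm{Block}/\mathrm{Thread}=T$ (with $h/h=1$, $\mathrm{Grid}/\mathrm{Thread}=BT$); $(h_1,n_1)/(h_2,n_2)=((h_1/h_2)\cdot n_1)/n_2$. For $\pi=(h,n)$, $\pi\vdash p$ means $p<n$. Types: base types $\beta ::= \mathrm{bool}\mid\mathrm{int}\mid\mathrm{float}$; $\tau ::= \beta\mid\beta[]^{l}\mid\mathrm{Fun}(\Gamma',\pi,m)\mid\mathrm{async}\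 \tau$. Contexts $\Gamma$ are finite lists of bindings $x:^{\pi}\tau$. Expressions: $e ::= x\mid n\mid f\mid b\mid\mathrm{partition\_id}\mid e_1[e_2]\mid e_1\ \mathrm{bop}\ e_2\mid e_1\ \mathrm{cmp}\ e_2$ ($\mathrm{bop}$ fixed total functions $\mathbb{Z}^2\to\mathbb{Z}$, $\mathrm{cmp}$ fixed total functions $\mathbb{Z}^2\to\{\mathrm{true},\mathrm{false}\}$). Expression typing $\Gamma\vdash^{\pi}e:\tau$ is the least relation with: if $x:^{\pi}\tau\in\Gamma$ then $\Gamma\vdash^{\pi}x:\tau$; literals typed int/float/bool at any $\pi$; if $\pi<(\mathrm{Grid},1)$ then $\Gamma\vdash^{\pi}\mathrm{partition\_id}:\mathrm{int}$; if $\Gamma\vdash^{\pi''}e_1:\tau[]^{l}$, $\Gamma\vdash^{\pi}e_2:\mathrm{int}$, $l\in\{\mathrm{Global},\mathrm{Local}\}$, $\pi\le\pi''$ then $\Gamma\vdash^{\pi}e_1[e_2]:\tau$; if $\Gamma\vdash^{\pi''}e_1:\tau[]^{\mathrm{Shared}}$, $\Gamma\vdash^{\pi}e_2:\mathrm{int}$, $\pi\le(\mathrm{Block},1)$, $\pi\le\pi''$ then $\Gamma\vdash^{\pi}e_1[e_2]:\tau$; if $e_1,e_2$ have type int at $\pi$ then $e_1\ \mathrm{bop}\ e_2:\mathrm{int}$ and $e_1\ \mathrm{cmp}\ e_2:\mathrm{bool}$ at $\pi$. Values are integers, floats, booleans, array references $\langle x,n\rangle$ and function closures. Memories $\eta$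 (local), $\sigma$ (shared), $\Sigma$ (global) are finite maps from names (identified with integer locations) to values annotated with perspectives ($x\mapsto^{\pi}v$), with disjoint domains; $\mathrm{get}(\eta,\sigma,\Sigma,x)$ returns the value at $x$ from whichever memory contains it. Value typing $\eta,\sigma,\Sigma\vdash v:\tau$: integers:int, booleans:bool, floats:float; $\langle x,n\rangle:\beta[]^{l}$ iff $\mathrm{get}(\eta,\sigma,\Sigma,x+i):\beta$ for all $i<n$; closures have function types according to a fixed given relation. Environment typing $\Gamma\vdash\eta,\sigma,\Sigma$ holds iff for every binding $x:^{\pi}\tau\in\Gamma$: for $\tau$ a base type or $\beta[]^{\mathrm{Local}}$, $\eta$ maps $x\mapsto^{\pi}v$ with $v:\tau$; for $\beta[]^{\mathrm{Shared}}$, $\sigma$ maps $x\mapsto^{\pi}v$ with $v:\tau$; for $\beta[]^{\mathrm{Global}}$ or a function type, $\Sigma$ maps $x\mapsto^{\pi}v$ with $v:\tau$; and no binding has an $\mathrm{async}$ type. Evaluation $\eta,\sigma,\Sigma\vdash^{\pi}_{\pi'}e\Downarrow v$ is the least relation with: if $\pi<(\mathrm{Grid},1)$ and $\pi'\le\pi$ then $\mathrm{partition\_id}\Downarrow\pi/\pi'-1$; $x\Downarrow\mathrm{get}(\eta,\sigma,\Sigma,x)$; if $e_1\Downarrow\langle l,n\rangle$, $e_2\Downarrow i$, $i<n$, $\pi'\le\pi$ then $e_1[e_2]\Downarrow\mathrm{get}(\eta,\sigma,\Sigma,l+i)$; literals evaluate to themselves; $e_1\ \mathrm{bop}\ e_2$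 and $e_1\ \mathrm{cmp}\ e_2$ evaluate by evaluating both operands (at the same $\pi,\pi'$) and applying the operation. *)

From Stdlib Require Import QArith ZArith List.
Import ListNotations.
Open Scope Z_scope.

Inductive level := Thread | Block | Grid.
Inductive memkind := Local | Shared | Global.

Definition level_rank (h : level) : nat :=
  match h with Thread => 0 | Block => 1 | Grid => 2 end.
Definition level_le (h1 h2 : level) : Prop := (level_rank h1 <= level_rank h2)%nat.

Definition persp := (level * nat)%type.

Definition persp_le (p1 p2 : persp) : Prop :=
  Nat.divide (snd p1) (snd p2) /\ level_le (fst p1) (fst p2).
Definition persp_lt (p1 p2 : persp) : Prop := persp_le p1 p2 /\ p1 <> p2.

(** Level ratios, for T threads per block and B blocks per grid.
    Only h1 >= h2 is meaningful; other cases are set to 0 (never used). *)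
Definition level_ratio (T B : nat) (h1 h2 : level) : nat :=
  match h1, h2 with
  | Thread, Thread | Block, Block | Grid, Grid => 1
  | Grid, Block => B
  | Block, Thread => T
  | Grid, Thread => B * T
  | _, _ => 0
  end%nat.

Definition persp_div (T B : nat) (p1 p2 : persp) : nat :=
  ((level_ratio T B (fst p1) (fst p2) * snd p1) / snd p2)%nat.

Definition persp_entails (pi : persp) (p : nat) : Prop := (p < snd pi)%nat.

Inductive basety := TyBool | TyInt | TyFloat.

Inductive ty :=
| TBase  : basety -> ty
| TArr   : basety -> memkind -> ty
| TFun   : list (Z * persp * ty) -> persp -> nat -> ty
| TAsync : ty -> ty.

Definition binding := (Z * persp * ty)%type.
Definition context := list binding.

(** Floats: an abstract carrier is not needed; we represent float literals
    by rationals (no floating-point operation occurs in expressions). *)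
Definition flt := Q.

Inductive expr :=
| EVar   : Z -> expr
| EInt   : Z -> expr
| EFloat : flt -> expr
| EBool  : bool -> expr
| EPid   : expr
| EIdx   : expr -> expr -> expr
| EBop   : (Z -> Z -> Z) -> expr -> expr -> expr
| ECmp   : (Z -> Z -> bool) -> expr -> expr -> expr.

Inductive has_type (G : context) : persp -> expr -> ty -> Prop :=
| T_Var : forall pi x t, In (x, pi, t) G -> has_type G pi (EVar x) t
| T_Int : forall pi n, has_type G pi (EInt n) (TBase TyInt)
| T_Float : forall pi f, has_type G pi (EFloat f) (TBase TyFloat)
| T_Bool : forall pi b, has_type G pi (EBool b) (TBase TyBool)
| T_Pid : forall pi, persp_lt pi (Grid, 1%nat) -> has_type G pi EPid (TBase TyInt)
| T_IdxGL : forall pi pi'' e1 e2 b l,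
    has_type G pi'' e1 (TArr b l) ->
    has_type G pi e2 (TBase TyInt) ->
    (l = Global \/ l = Local) ->
    persp_le pi pi'' ->
    has_type G pi (EIdx e1 e2) (TBase b)
| T_IdxSh : forall pi pi'' e1 e2 b,
    has_type G pi'' e1 (TArr b Shared) ->
    has_type G pi e2 (TBase TyInt) ->
    persp_le pi (Block, 1%nat) ->
    persp_le pi pi'' ->
    has_type G pi (EIdx e1 e2) (TBase b)
| T_Bop : forall pi op e1 e2,
    has_type G pi e1 (TBase TyInt) -> has_type G pi e2 (TBase TyInt) ->
    has_type G pi (EBop op e1 e2) (TBase TyInt)
| T_Cmp : forall pi op e1 e2,
    has_type G pi e1 (TBase TyInt) -> has_type G pi e2 (TBase TyInt) ->
    has_type G pi (ECmp op e1 e2) (TBase TyBool).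

Inductive value (C : Type) :=
| VInt   : Z -> value C
| VFloat : flt -> value C
| VBool  : bool -> value C
| VArr   : Z -> Z -> value C
| VClos  : C -> value C.
Arguments VInt {C}. Arguments VFloat {C}. Arguments VBool {C}.
Arguments VArr {C}. Arguments VClos {C}.

(** Memories: finite maps from names (= integer locations) to
    perspective-annotated values. *)
Definition memory (C : Type) := Z -> option (persp * value C).

Definition mem_finite {C} (m : memory C) : Prop :=
  exists dom : list Z, forall x, m x <> None -> In x dom.

Definition mem_disjoint {C} (m1 m2 : memory C) : Prop :=
  forall x, m1 x = None \/ m2 x = None.

Definition get {C} (eta sig Sig : memory C) (x : Z) : option (value C) :=
  match eta x with
  | Some (_, v) => Some v
  | None => match sig x with
            | Some (_, v) => Some v
            | None => match Sig x with
                      | Some (_, v) => Some v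
                      | None => None
                      end
            end
  end.

Definition base_val_ty {C} (v : value C) (b : basety) : Prop :=
  match v, b with
  | VInt _, TyInt | VBool _, TyBool | VFloat _, TyFloat => True
  | _, _ => False
  end.

Definition val_ty {C} (cloty : C -> ty -> Prop) (eta sig Sig : memory C)
    (v : value C) (t : ty) : Prop :=
  match v, t with
  | VInt _, TBase TyInt | VBool _, TBase TyBool | VFloat _, TBase TyFloat => True
  | VArr x n, TArr b _ =>
      forall i : Z, (0 <= i < n)%Z ->
        exists w, get eta sig Sig (x + i)%Z = Some w /\ base_val_ty w b
  | VClos c, _ => cloty c t
  | _, _ => False
  end.

Definition is_async (t : ty) : Prop :=
  match t with TAsync _ => True | _ => False end.

Definition env_ty {C} (cloty : C -> ty -> Prop) (G : context)
    (eta sig Sig : memory C) : Prop :=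
  forall x pi t, In (x, pi, t) G ->
    ~ is_async t /\
    match t with
    | TBase _ | TArr _ Local =>
        exists v, eta x = Some (pi, v) /\ val_ty cloty eta sig Sig v t
    | TArr _ Shared =>
        exists v, sig x = Some (pi, v) /\ val_ty cloty eta sig Sig v t
    | TArr _ Global | TFun _ _ _ =>
        exists v, Sig x = Some (pi, v) /\ val_ty cloty eta sig Sig v t
    | TAsync _ => False
    end.

Inductive eval {C} (T B : nat) (eta sig Sig : memory C) (pi pi' : persp)
    : expr -> value C -> Prop :=
| E_Pid : persp_lt pi (Grid, 1%nat) -> persp_le pi' pi ->
    eval T B eta sig Sig pi pi' EPid (VInt (Z.of_nat (persp_div T B pi pi') - 1)%Z)
| E_Var : forall x v, get eta sig Sig x = Some v ->
    eval T B eta sig Sig pi pi' (EVar x) v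
| E_Idx : forall e1 e2 l n i v,
    eval T B eta sig Sig pi pi' e1 (VArr l n) ->
    eval T B eta sig Sig pi pi' e2 (VInt i) ->
    (i < n)%Z -> persp_le pi' pi ->
    get eta sig Sig (l + i)%Z = Some v ->
    eval T B eta sig Sig pi pi' (EIdx e1 e2) v
| E_Int : forall n, eval T B eta sig Sig pi pi' (EInt n) (VInt n)
| E_Float : forall f, eval T B eta sig Sig pi pi' (EFloat f) (VFloat f)
| E_Bool : forall b, eval T B eta sig Sig pi pi' (EBool b) (VBool b)
| E_Bop : forall op e1 e2 n1 n2,
    eval T B eta sig Sig pi pi' e1 (VInt n1) ->
    eval T B eta sig Sig pi pi' e2 (VInt n2) ->
    eval T B eta sig Sig pi pi' (EBop op e1 e2) (VInt (op n1 n2))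
| E_Cmp : forall op e1 e2 n1 n2,
    eval T B eta sig Sig pi pi' e1 (VInt n1) ->
    eval T B eta sig Sig pi pi' e2 (VInt n2) ->
    eval T B eta sig Sig pi pi' (ECmp op e1 e2) (VBool (op n1 n2)).

Inductive subexpr : expr -> expr -> Prop :=
| Sub_refl : forall e, subexpr e e
| Sub_Idx1 : forall e e1 e2, subexpr e e1 -> subexpr e (EIdx e1 e2)
| Sub_Idx2 : forall e e1 e2, subexpr e e2 -> subexpr e (EIdx e1 e2)
| Sub_Bop1 : forall e op e1 e2, subexpr e e1 -> subexpr e (EBop op e1 e2)
| Sub_Bop2 : forall e op e1 e2, subexpr e e2 -> subexpr e (EBop op e1 e2)
| Sub_Cmp1 : forall e op e1 e2, subexpr e e1 -> subexpr e (ECmp op e1 e2)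
| Sub_Cmp2 : forall e op e1 e2, subexpr e e2 -> subexpr e (ECmp op e1 e2).

Definition accesses_in_bounds {C} (T B : nat) (eta sig Sig : memory C)
    (pi pi' : persp) (e : expr) : Prop :=
  forall e1 e2 l n i, subexpr (EIdx e1 e2) e ->
    eval T B eta sig Sig pi pi' e1 (VArr l n) ->
    eval T B eta sig Sig pi pi' e2 (VInt i) ->
    (0 <= i < n)%Z.

(* A variable
   is read by [get] from the memory in which environment typing places it; since
   [get] searches the local, shared and global memories in this order, the
   disjointness of the memories makes it return exactly that value.  An array
   access [e1[e2]] yields an element of the array value of [e1], which the
   induction hypothesis types as an array; the in-bounds assumption then gives
   the element its base type. *)

From Stdlib Require Import ZArith List.

Lemma subexpr_trans (e1 e2 e3 : expr) :
  subexpr e1 e2 -> subexpr e2 e3 -> subexpr e1 e3.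
Proof.
  intros H12 H23; induction H23.
  - exact H12.
  - apply Sub_Idx1; auto.
  - apply Sub_Idx2; auto.
  - apply Sub_Bop1; auto.
  - apply Sub_Bop2; auto.
  - apply Sub_Cmp1; auto.
  - apply Sub_Cmp2; auto.
Qed.

Lemma accesses_in_bounds_subexpr {C} (T B : nat) (eta sig Sig : memory C)
    (pi pi' : persp) (e e' : expr) :
  subexpr e' e ->
  accesses_in_bounds T B eta sig Sig pi pi' e ->
  accesses_in_bounds T B eta sig Sig pi pi' e'.
Proof.
  intros Hsub Hacc e1 e2 l n i Hsub' E1 E2.
  exact (Hacc e1 e2 l n i (subexpr_trans _ _ _ Hsub' Hsub) E1 E2).
Qed.

Lemma base_val_ty_val_ty {C} (cloty : C -> ty -> Prop) (eta sig Sig : memory C)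
    (w : value C) (b : basety) :
  base_val_ty w b -> val_ty cloty eta sig Sig w (TBase b).
Proof. destruct w, b; simpl; tauto. Qed.

Lemma val_ty_arr_get {C} (cloty : C -> ty -> Prop) (eta sig Sig : memory C)
    (l n i : Z) (b : basety) (k : memkind) (w : value C) :
  val_ty cloty eta sig Sig (VArr l n) (TArr b k) ->
  (0 <= i < n)%Z ->
  get eta sig Sig (l + i)%Z = Some w ->
  val_ty cloty eta sig Sig w (TBase b).
Proof.
  simpl; intros Harr Hi Hget.
  destruct (Harr i Hi) as [w' [Hget' Hw']].
  rewrite Hget in Hget'; injection Hget' as <-.
  now apply base_val_ty_val_ty.
Qed.

Section DisjointMemories.

Variable C : Type.
Variables eta sig Sig : memory C.
Hypothesis disj_eta_sig : mem_disjoint eta sig.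
Hypothesis disj_eta_Sig : mem_disjoint eta Sig.
Hypothesis disj_sig_Sig : mem_disjoint sig Sig.

Lemma get_local (x : Z) (pi : persp) (v : value C) :
  eta x = Some (pi, v) -> get eta sig Sig x = Some v.
Proof. unfold get; intros H; now rewrite H. Qed.

Lemma get_shared (x : Z) (pi : persp) (v : value C) :
  sig x = Some (pi, v) -> get eta sig Sig x = Some v.
Proof.
  unfold get; intros H.
  destruct (disj_eta_sig x) as [E | E]; [| congruence].
  now rewrite E, H.
Qed.

Lemma get_global (x : Z) (pi : persp) (v : value C) :
  Sig x = Some (pi, v) -> get eta sig Sig x = Some v.
Proof.
  unfold get; intros H.
  destruct (disj_eta_Sig x) as [E | E]; [| congruence].
  destruct (disj_sig_Sig x) as [E' | E']; [| congruence].
  now rewrite E, E', H.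
Qed.

Variable cloty : C -> ty -> Prop.
Variable G : context.
Hypothesis env_typed : env_ty cloty G eta sig Sig.

Lemma env_ty_get (x : Z) (pi : persp) (t : ty) :
  In (x, pi, t) G ->
  exists v, get eta sig Sig x = Some v /\ val_ty cloty eta sig Sig v t.
Proof.
  intros Hin; destruct (env_typed x pi t Hin) as [_ Hmem].
  destruct t as [b | b [| |] | g q m | t']; try contradiction;
    destruct Hmem as [v [Hx Hv]]; exists v; split; try exact Hv.
  - exact (get_local _ _ _ Hx).
  - exact (get_local _ _ _ Hx).
  - exact (get_shared _ _ _ Hx).
  - exact (get_global _ _ _ Hx).
  - exact (get_global _ _ _ Hx).
Qed.

Variables (T B : nat) (pi pi' : persp).

Lemma eval_idx_val_ty (e1 e2 : expr) (b : basety) (k : memkind) (v : value C) :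
  (forall a, accesses_in_bounds T B eta sig Sig pi pi' e1 ->
     eval T B eta sig Sig pi pi' e1 a -> val_ty cloty eta sig Sig a (TArr b k)) ->
  accesses_in_bounds T B eta sig Sig pi pi' (EIdx e1 e2) ->
  eval T B eta sig Sig pi pi' (EIdx e1 e2) v ->
  val_ty cloty eta sig Sig v (TBase b).
Proof.
  intros IH1 Hacc Hev.
  inversion Hev as [| | e1' e2' l n i v' E1 E2 _ _ Hget | | | | |]; subst.
  assert (Hacc1 : accesses_in_bounds T B eta sig Sig pi pi' e1)
    by exact (accesses_in_bounds_subexpr _ _ _ _ _ _ _ _ _
                (Sub_Idx1 _ _ e2 (Sub_refl _)) Hacc).
  apply (val_ty_arr_get cloty eta sig Sig l n i b k v); auto.
  exact (Hacc e1 e2 l n i (Sub_refl _) E1 E2).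
Qed.

Lemma eval_val_ty (pi0 : persp) (e : expr) (t : ty) :
  has_type G pi0 e t ->
  forall v, accesses_in_bounds T B eta sig Sig pi pi' e ->
  eval T B eta sig Sig pi pi' e v ->
  val_ty cloty eta sig Sig v t.
Proof.
  induction 1 as [pi0 x t Hin | | | | | ? ? e1 e2 b k _ IH1 | ? ? e1 e2 b _ IH1 | |];
    intros v Hacc Hev.
  2-5, 8-9: inversion Hev; subst; exact I.
  - inversion Hev as [| ? ? Hget | | | | | |]; subst.
    destruct (env_ty_get x pi0 t Hin) as [w [Hget' Hw]].
    congruence.
  - exact (eval_idx_val_ty e1 e2 b k v IH1 Hacc Hev).
  - exact (eval_idx_val_ty e1 e2 b Shared v IH1 Hacc Hev).
Qed.

End DisjointMemories.

Theorem lemmaA6 (T B : nat) (HT : (0 < T)%nat) (HB : (0 < B)%nat)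
    (C : Type) (cloty : C -> ty -> Prop)
    (G : context) (e : expr) (t : ty) (pi pi' : persp) (p : nat)
    (eta sig Sig : memory C) (v : value C) :
  mem_finite eta -> mem_finite sig -> mem_finite Sig ->
  mem_disjoint eta sig -> mem_disjoint eta Sig -> mem_disjoint sig Sig ->
  accesses_in_bounds T B eta sig Sig pi pi' e ->
  has_type G pi e t ->
  env_ty cloty G eta sig Sig ->
  persp_entails pi p ->
  eval T B eta sig Sig pi pi' e v ->
  val_ty cloty eta sig Sig v t.
Proof.
  intros _ _ _ D_eta_sig D_eta_Sig D_sig_Sig Hacc Ht Henv _ Hev.
  exact (eval_val_ty C eta sig Sig D_eta_sig D_eta_Sig D_sig_Sig cloty G Henv
           T B pi pi' pi e t Ht v Hacc Hev).
Qed.
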